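(* Let $(\mathfrak M,\mathscr A)$ be a quasi-differentiable Banach manifold modelled on $X$ with $C^1$-kernel $\mathfrak M_0$, and let $\eta\in\mathfrak M_0$. Then: (1) the map $\varphi'(\eta):\mathcal T_\eta(\mathfrak M)\to X$ is well defined, i.e. for $\upsilon=f'(0)$ the value $(\varphi\circ\psi^{-1})'(\psi(\eta))(\psi\circ f)'(0)$ does not depend on the choice of the curve $f$ with $f'(0)=\upsilon$ nor on the $\mathfrak M_0$-regular chart $\psi$ at $\eta$ with $\psi\circ f$ continuously differentiable at $0$; (2) for any two $\mathfrak M_0$-regular charts $(\mathcal U,\varphi),(\mathcal V,\psi)$ at $\eta$ there are constants $C_1,C_2>0$ with $\|\upsilon\|_\psi\le C_1\|\upsilon\|_\varphi$ and $\|\upsilon\|_\varphi\le C_2\|\upsilon\|_\psi$ for all $\upsilon\in\mathcal T^{00}_\eta(\mathfrak M)$; (3) for every $\mathfrak M_0$-regular chart $(\mathcal U,\varphi)$ at $\eta$, $\varphi'(\eta):\mathcal T_\eta(\mathfrak M)\to X$ is a bijection.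
   Context: Densely embedded spaces and the class $\mathfrak C^k$. For Banach spaces $X$ and $X_0$, $X_0$ is a densely embedded Banach subspace of $X$ if $X_0$ is a dense linear subspace of $X$ and there is $C>0$ with $\|x\|_X\le C\|x\|_{X_0}$ for $x\in X_0$. For such $X_0\subseteq X$, a Banach space $Y$, an open set $U_0\subseteq X_0$ and an integer $k\ge1$, $\mathfrak C^k(U_0;X,Y)$ denotes the set of maps $F:U_0\to Y$ such that (i) for each $x_0\in U_0$ there are bounded symmetric $j$-linear maps $F^{(j)}(x_0):X^j\to Y$, $1\le j\le k$, with $\|F(x)-F(x_0)-\sum_{j=1}^k\frac1{j!}F^{(j)}(x_0)(x-x_0,\dots,x-x_0)\|_Y/\|x-x_0\|_{X_0}^k\to0$ as $\|x-x_0\|_{X_0}\to0$, and (ii) $x\mapsto F^{(j)}(x)$ is continuous from $U_0$ (with the $X_0$-topology) into the space $L^j(X,Y)$ of bounded $j$-linear maps. We write $F'=F^{(1)}$. Embedded submanifolds and quasi-differentiable manifolds. Let $\mathfrak M,\mathfrak M_0$ be topological Banach manifolds modelled on $X$, $X_0$, let $\mathscr A$ be a family of local charts of $\mathfrak M$, and $k\ge1$. $\mathfrak M_0$ is a $C^k$-embedded Banach submanifold of $\mathfrak M$ with respect to $\mathscr A$ if: (D1) $X_0$ is a densely embedded Banach subspace of $X$; (D2) $\mathfrak M_0\subseteq\mathfrak M$ and $\mathcal U\cap\mathfrak M_0$ is open in $\mathfrak M_0$ for every open $\mathcal U\subseteq\mathfrak M$; (D3) the domains of the charts of $\mathscr A$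 cover $\mathfrak M$; (D4) for $\eta\in\mathfrak M_0$ and $(\mathcal U,\varphi)\in\mathscr A$ with $\eta\in\mathcal U$, $(\mathcal U_0,\varphi|_{\mathcal U_0})$ with $\mathcal U_0:=\mathcal U\cap\mathfrak M_0$ is a local chart of $\mathfrak M_0$; (D5) for $\eta\in\mathfrak M_0$ and $(\mathcal U,\varphi),(\mathcal V,\psi)\in\mathscr A$ with $\eta\in\mathcal U\cap\mathcal V$, $\psi\circ\varphi^{-1}\in\mathfrak C^k(\varphi(\mathcal U_0\cap\mathcal V_0);X,X)$ and $\varphi\circ\psi^{-1}\in\mathfrak C^k(\psi(\mathcal U_0\cap\mathcal V_0);X,X)$. A chart of $\mathscr A$ whose domain contains $\eta$ is an $\mathfrak M_0$-regular local chart at $\eta$. $(\mathfrak M,\mathfrak M_0,\mathscr A)$ (with $\mathfrak M_0$ $C^1$-embedded) is inward spreadable if there is a Banach manifold $\mathfrak M_1\subseteq\mathfrak M_0$, modelled on a Banach space $X_1$, which is a $C^1$-embedded Banach submanifold of $\mathfrak M_0$ with respect to the restrictions to $\mathfrak M_0$ of the charts of $\mathscr A$ ($\mathfrak M_1$ is then an inner $C^1$-kernel and the charts of $\mathscr A$ are called $(\mathfrak M_0,\mathfrak M_1)$-regular). It is outward spreadable if there is a Banach manifold $\widetilde{\mathfrak M}\supseteq\mathfrak M$ with a chart family $\widetilde{\mathscr A}$ whose restrictions to $\mathfrak M$ form $\mathscr A$, such that $\mathfrak M$ is a $C^1$-embedded Banach submanifold of $\widetilde{\mathfrak M}$ with respect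 to $\widetilde{\mathscr A}$ ($\widetilde{\mathfrak M}$ is a shell). If both hold, $(\mathfrak M,\mathscr A)$ is a quasi-differentiable Banach manifold with $C^1$-kernel $\mathfrak M_0$. For charts at $\eta\in\mathfrak M_0$, $(\varphi\circ\psi^{-1})'(\psi(\eta))\in L(X)$ is the first derivative in the $\mathfrak C^1$ sense. Tangent vectors. Let $\eta\in\mathfrak M_0$. $\dot{\mathscr D}^{1s}_\eta$ is the set of real functions $F$ defined on a neighbourhood of $\eta$ in $\mathfrak M$ for which there is a neighbourhood $\mathcal O'$ of $\eta$ in $\mathfrak M$ such that for every $\mathfrak M_0$-regular chart $(\mathcal U,\varphi)$ at $\eta$, $F\circ\varphi^{-1}$ is Fréchet differentiable in the norm of $X$ on $\varphi(\mathcal O'\cap\mathcal U)$ with derivative continuous into $X^*$. A curve $f:(-\varepsilon,\varepsilon)\to\mathfrak M$ with $f(0)=\eta$ is continuously differentiable at $t=0$ if (after shrinking $\varepsilon$) there is an $\mathfrak M_0$-regular chart $(\mathcal U,\varphi)$ at $\eta$ with $t\mapsto\varphi(f(t))$ continuously differentiable on $(-\varepsilon,\varepsilon)$ in $X$, and $(\psi\circ f)'(0)=(\psi\circ\varphi^{-1})'(\varphi(\eta))(\varphi\circ f)'(0)$ for every $\mathfrak M_0$-regular chart $\psi$ at $\eta$ with $\psi\circ f$ continuously differentiable at $0$ in $X$. Its tangent vector is $f'(0):\dot{\mathscr D}^{1s}_\eta\to\mathbb R$, $f'(0)F=(F\circ f)'(0)$. $\mathcal T_\eta(\mathfrak M)$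 is the set of all such $f'(0)$. For an $\mathfrak M_0$-regular chart $\varphi$ at $\eta$, $\varphi'(\eta)\upsilon:=(\varphi\circ\psi^{-1})'(\psi(\eta))(\psi\circ f)'(0)$ for $\upsilon=f'(0)$, where $\psi$ is an $\mathfrak M_0$-regular chart at $\eta$ with $\psi\circ f$ continuously differentiable at $0$ in $X$; $\|\upsilon\|_\varphi:=\|\varphi'(\eta)\upsilon\|_X$. $\mathcal T^{00}_\eta(\mathfrak M)$ is the set of $f'(0)$ for curves $f:(-\varepsilon,\varepsilon)\to\mathfrak M_0$, $f(0)=\eta$, such that (after shrinking $\varepsilon$) for every $\mathfrak M_0$-regular chart $\varphi$ at $\eta$, $t\mapsto\varphi(f(t))$ is continuously differentiable on $(-\varepsilon,\varepsilon)$ in the norm of $X_0$. *)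

From HB Require Import structures.
From mathcomp Require Import all_boot all_order all_algebra.
From mathcomp Require Import all_classical all_reals all_analysis.
Set Implicit Arguments. Unset Strict Implicit. Unset Printing Implicit Defensive.
Import Order.TTheory GRing.Theory Num.Theory.
Import numFieldNormedType.Exports.
Local Open Scope classical_set_scope.
Local Open Scope ring_scope.

Record chart (M X : Type) := Chart { cdom : set M; cmap : M -> X; cinv : X -> M }.

Section Defs.
Variable R : realType.

Definition is_local_chart (M : topologicalType) (X : normedModType R)
  (c : chart M X) : Prop :=
  open (cdom c) /\ open (cmap c @` cdom c) /\
  (forall m, cdom c m -> cinv c (cmap c m) = m) /\
  {within cdom c, continuous (cmap c)} /\
  {within cmap c @` cdom c, continuous (cinv c)}.

Definition is_top_manifold (M : topologicalType) (X : normedModType R) : Prop :=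
  forall m : M, exists c : chart M X, is_local_chart c /\ cdom c m.

Definition dense_embedding (X0 X : normedModType R) (i : X0 -> X) : Prop :=
  (forall (a : R) (u v : X0), i (a *: u + v) = a *: i u + i v) /\
  injective i /\
  (exists C : R, 0 < C /\ forall x, `|i x| <= C * `|x|) /\
  dense (range i).

Definition isC1 (X0 X Y : normedModType R) (i : X0 -> X) (S : set X0)
  (F : X0 -> Y) (DF : X0 -> X -> Y) : Prop :=
  forall x, S x ->
    (forall (a : R) (u v : X), DF x (a *: u + v) = a *: DF x u + DF x v) /\
    (exists K : R, forall v, `|DF x v| <= K * `|v|) /\
    (forall e : R, 0 < e -> exists d : R, 0 < d /\ forall y, S y ->
        `|y - x| < d -> `|F y - F x - DF x (i y - i x)| <= e * `|y - x|) /\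
    (forall e : R, 0 < e -> exists d : R, 0 < d /\ forall y, S y ->
        `|y - x| < d -> forall v, `|DF y v - DF x v| <= e * `|v|).

Section Embedded.
Variables (X0 X : normedModType R) (i : X0 -> X)
  (M0 M : topologicalType) (j : M0 -> M).

Definition restricts (c0 : chart M0 X0) (c : chart M X) : Prop :=
  (forall m, cdom c0 m <-> cdom c (j m)) /\
  (forall m, cdom c0 m -> i (cmap c0 m) = cmap c (j m)).

(* phi(U0 ∩ V0) (as a subset of X0) for phi = c, psi = d *)
Definition tdom (c d : chart M X) : set X0 :=
  [set x | exists m, cdom c (j m) /\ cdom d (j m) /\ i x = cmap c (j m)].

Definition trans (c d : chart M X) : X0 -> X := fun x => cmap d (cinv c (i x)).

Definition C1_embedded (A : set (chart M X)) : Prop :=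
  dense_embedding i /\
  is_top_manifold M X /\ is_top_manifold M0 X0 /\
  (forall c, A c -> is_local_chart c) /\
  injective j /\
  (forall U, open U -> open (j @^-1` U)) /\
  (forall m : M, exists c, A c /\ cdom c m) /\
  (forall eta : M0, forall c, A c -> cdom c (j eta) ->
              exists c0 : chart M0 X0, is_local_chart c0 /\ restricts c0 c) /\
  (forall eta : M0, forall c d, A c -> A d -> cdom c (j eta) ->
              cdom d (j eta) ->
              (exists DF, isC1 i (tdom c d) (trans c d) DF) /\
              (exists DF, isC1 i (tdom d c) (trans d c) DF)).

Definition restr_family (A : set (chart M X)) : set (chart M0 X0) :=
  [set c0 | is_local_chart c0 /\ exists c, A c /\ restricts c0 c].

End Embedded.

Definition inward_spreadable (X0 X : completeNormedModType R) (i : X0 -> X)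
  (M0 M : topologicalType) (j : M0 -> M) (A : set (chart M X)) : Prop :=
  exists (X1 : completeNormedModType R) (i1 : X1 -> X0)
         (M1 : topologicalType) (j1 : M1 -> M0),
    C1_embedded i1 j1 (restr_family i j A).

Definition outward_spreadable (X : completeNormedModType R)
  (M : topologicalType) (A : set (chart M X)) : Prop :=
  exists (Xt : completeNormedModType R) (it : X -> Xt)
         (Mt : topologicalType) (jt : M -> Mt) (At : set (chart Mt Xt)),
    C1_embedded it jt At /\
    (forall c, A c -> exists ct, At ct /\ restricts it jt c ct) /\
    (forall ct, At ct -> (exists m, cdom ct (jt m)) ->
        exists c, A c /\ restricts it jt c ct).

Definition quasi_differentiable (X0 X : completeNormedModType R) (i : X0 -> X)
  (M0 M : topologicalType) (j : M0 -> M) (A : set (chart M X)) : Prop :=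
  C1_embedded i j A /\ inward_spreadable i j A /\ outward_spreadable A.

Section Tangent.
Variables (X0 X : completeNormedModType R) (i : X0 -> X)
  (M0 M : topologicalType) (j : M0 -> M) (A : set (chart M X)) (eta : M0).

Definition regular (c : chart M X) : Prop := A c /\ cdom c (j eta).

Definition trans_deriv (c d : chart M X) (D : X -> X) : Prop :=
  exists DF, isC1 i (tdom i j c d) (trans i c d) DF /\
  exists p, i p = cmap c (j eta) /\ D = DF p.

Definition C1on (V : normedModType R) (g : R -> V) (e : R) : Prop :=
  forall t : R, - e < t < e ->
    derivable g t 1 /\ (derive1 g) s @[s --> t] --> derive1 g t.

Definition C1at_chart (c : chart M X) (f : R -> M) : Prop :=
  exists e : R, 0 < e /\ (forall t : R, - e < t < e -> cdom c (f t)) /\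
    C1on (cmap c \o f) e.

Definition C1_curve (f : R -> M) : Prop :=
  f 0 = j eta /\
  exists c, regular c /\ C1at_chart c f /\
    forall d, regular d -> C1at_chart d f -> forall D, trans_deriv c d D ->
      derive1 (cmap d \o f) 0 = D (derive1 (cmap c \o f) 0).

Definition D1s (F : M -> R) : Prop :=
  exists O, nbhs (j eta) O /\ forall c, regular c ->
    let S := cmap c @` (O `&` cdom c) in
    (forall x, S x -> differentiable (F \o cinv c) x) /\
    (forall x, S x -> forall e : R, 0 < e -> exists d : R, 0 < d /\
       forall y, S y -> `|y - x| < d -> forall v,
         `|'d (F \o cinv c) y v - 'd (F \o cinv c) x v| <= e * `|v|).

Definition same_tangent (f g : R -> M) : Prop :=
  forall F, D1s F -> derive1 (F \o f) 0 = derive1 (F \o g) 0.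

(* v = phi'(eta) (f'(0)) for phi = c *)
Definition tderiv (c : chart M X) (f : R -> M) (v : X) : Prop :=
  exists g, C1_curve g /\ same_tangent g f /\
    exists d, regular d /\ C1at_chart d g /\
      exists D, trans_deriv d c D /\ v = D (derive1 (cmap d \o g) 0).

Definition T00_curve (f : R -> M0) : Prop :=
  f 0 = eta /\ forall c, regular c ->
    exists e : R, 0 < e /\ exists p : R -> X0,
      (forall t : R, - e < t < e -> cdom c (j (f t)) /\ i (p t) = cmap c (j (f t))) /\
      C1on p e.

End Tangent.
End Defs.

(* A tangent vector f'(0) acts on test functions by F |-> (F o f)'(0), and the
   chain rule expresses this as d(F o phi^-1)(phi eta) applied to the chart
   velocity (phi o f)'(0); across two charts the velocities differ by the
   derivative of the transition map. So all three claims reduce to one fact: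
   the differentials at phi(eta) of the test functions separate the points of X.
   This is where the shell is used. A bounded functional on the shell space
   (Hahn-Banach) read in a shell chart is a test function, because shell
   transitions are C^1 in the norm of X, and its differential at phi(eta) is
   the functional itself restricted to X. Surjectivity comes from straight
   lines in a chart, and the norm equivalence from the boundedness of the
   derivatives of transition maps. *)

From HB Require Import structures.
From mathcomp Require Import all_boot all_order all_algebra.
From mathcomp Require Import all_classical all_reals all_analysis.
From mathcomp Require Import ring lra.
Set Implicit Arguments. Unset Strict Implicit. Unset Printing Implicit Defensive.
Import Order.TTheory GRing.Theory Num.Theory.
Import numFieldNormedType.Exports.
Local Open Scope classical_set_scope.
Local Open Scope ring_scope.

Section LinearLaw.
Variables (R : realType) (V W : normedModType R) (L : V -> W).
Hypothesis L_linear : forall (a : R) u v, L (a *: u + v) = a *: L u + L v.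

Let Llin : {linear V -> W} :=
  HB.pack_for {linear V -> W} L (GRing.isLinear.Build _ _ _ _ _ L_linear).

Lemma linear_law0 : L 0 = 0. Proof. exact: (linear0 Llin). Qed.
Lemma linear_lawB u v : L (u - v) = L u - L v. Proof. exact: (linearB Llin). Qed.

Hypothesis L_bounded : exists K : R, forall v, `|L v| <= K * `|v|.

Lemma linear_law_pos_bound : exists2 K : R, 0 < K & forall v, `|L v| <= K * `|v|.
Proof.
have [K HK] := L_bounded; exists (`|K| + 1) => [|v]; first by rewrite ltr_wpDl.
by apply: (le_trans (HK v)); rewrite ler_wpM2r // (le_trans (ler_norm K)) // lerDl.
Qed.

Lemma linear_law_continuous : continuous L.
Proof.
have [K HK] := L_bounded.
apply: (@bounded_linear_continuous _ _ _ Llin); apply/bounded_funP => r.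
exists (`|K| * `|r|) => v vr; apply: (le_trans (HK v)).
apply: (le_trans (ler_norm _)); rewrite normrM normr_id ler_wpM2l //.
exact: le_trans vr (ler_norm _).
Qed.

Lemma diff_of_estimate (G : V -> W) (x : V) :
  (forall e : R, 0 < e -> exists d : R, 0 < d /\ forall y, `|y - x| < d ->
    `|G y - G x - L (y - x)| <= e * `|y - x|) ->
  differentiable G x /\ ('d G x : V -> W) = L.
Proof.
move=> Hest.
have Gx : G \o shift x = cst (G x) + Llin +o_ 0 id.
  apply/eqaddoP => e e0; apply/nbhs_norm0P.
  have [d [d0 Hd]] := Hest e e0; exists d => // h /= hd.
  by have := Hd (h + x); rewrite addrK opprD addrA; apply.
have dG : 'd G x = Llin :> (V -> W) by apply: diff_unique => //; exact: linear_law_continuous.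
split; last exact: dG.
by apply/diff_locallyP; rewrite dG; split => //; exact: linear_law_continuous.
Qed.

Lemma linear_law_diff (x : V) : differentiable L x /\ ('d L x : V -> W) = L.
Proof.
apply: diff_of_estimate => e e0; exists 1; split => // y _.
by rewrite linear_lawB subrr normr0 mulr_ge0 // ltW.
Qed.

End LinearLaw.

Lemma continuous_eq_on_dense_range (R : realType) (V W : normedModType R)
    (T : Type) (i : T -> V) (f g : V -> W) :
  dense (range i) -> continuous f -> continuous g ->
  (forall t, f (i t) = g (i t)) -> f = g.
Proof.
move=> dense_i cf cg fg; apply/funext => z; apply: contrapT => fgz.
have open_neq : open [set y | f y - g y != 0].
  have -> : [set y | f y - g y != 0] = (f \- g) @^-1` ~` [set 0].
    by apply/seteqP; split => y /=; move/eqP.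
  apply: open_comp.
    by move=> y _; apply: continuousB; [exact: cf|exact: cg].
  exact/closed_openC/accessible_closed_set1/hausdorff_accessible/norm_hausdorff.
have fgz' : f z - g z != 0 by rewrite subr_eq0; exact/eqP.
have [y [/= fgy [t _ ty]]] := dense_i _ (ex_intro _ z fgz') open_neq.
by move: fgy; rewrite -ty fg subrr eqxx.
Qed.

Section HahnBanach.
Variables (R : realType) (V : normedModType R).

(* Partial functionals dominated by the norm, encoded by their graphs so that
   Zorn's lemma applies to inclusion. *)
Definition dominated_graph (G : set (V * R)) : Prop :=
  [/\ forall x a b, G (x, a) -> G (x, b) -> a = b,
      forall x y a b (t : R), G (x, a) -> G (y, b) -> G (t *: x + y, t * a + b)
    & forall x a, G (x, a) -> a <= `|x|].

Section DominatedGraph.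
Variable G : set (V * R).
Hypothesis domG : dominated_graph G.

Lemma dominated_graph0 {x a} : G (x, a) -> G (0, 0).
Proof.
by case: domG => _ Glin _ Gx; have := Glin _ _ _ _ (-1) Gx Gx; rewrite scaleN1r mulN1r !addNr.
Qed.

Lemma dominated_graphZ {x a} (t : R) : G (x, a) -> G (t *: x, t * a).
Proof.
move=> Gx; case: domG => _ Glin _.
by have := Glin _ _ _ _ t Gx (dominated_graph0 Gx); rewrite !addr0.
Qed.

Lemma dominated_graphB {x y a b} : G (x, a) -> G (y, b) -> G (y - x, b - a).
Proof.
move=> Gx Gy; case: domG => _ Glin _.
by have := Glin _ _ _ _ (-1) Gx Gy; rewrite scaleN1r mulN1r addrC [- a + _]addrC.
Qed.

Lemma dominated_graph_gap x0 : G !=set0 ->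
  exists c : R, (forall u a, G (u, a) -> a - `|u - x0| <= c) /\
                (forall w b, G (w, b) -> c <= `|w + x0| - b).
Proof.
move=> [[x1 a1] G1]; have [_ Glin Gdom] := domG.
pose S := [set r : R | exists u a, G (u, a) /\ r = a - `|u - x0|].
have ubS w b : G (w, b) -> ubound S (`|w + x0| - b).
  move=> Gw _ [u [a [Gu ->]]].
  have := Gdom _ _ (Glin _ _ _ _ 1 Gu Gw); rewrite scale1r mul1r.
  have : `|u + w| <= `|u - x0| + `|w + x0|.
    have -> : u + w = (u - x0) + (w + x0) by rewrite addrA addrAC subrK.
    exact: ler_normD.
  lra.
have G0 := dominated_graph0 G1.
have S0 : S (0 - `|0 - x0|) by exists 0, 0.
exists (sup S); split => [u a Gu|w b Gw].
  apply: sup_upper_bound; last by exists u, a.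
  by split; [exists (0 - `|0 - x0|)|exists (`|0 + x0| - 0); exact: ubS G0].
by apply: ge_sup; [exists (0 - `|0 - x0|)|exact: ubS].
Qed.

End DominatedGraph.

Section OneStepExtension.
Variables (G : set (V * R)) (x0 : V) (c : R).
Hypotheses (domG : dominated_graph G) (G_ne : G !=set0).
Hypothesis x0_new : ~ exists a, G (x0, a).
Hypothesis c_lower : forall u a, G (u, a) -> a - `|u - x0| <= c.
Hypothesis c_upper : forall w b, G (w, b) -> c <= `|w + x0| - b.

Definition graph_extension : set (V * R) :=
  [set p | exists y a (t : R), G (y, a) /\ p = (y + t *: x0, a + t * c)].

Lemma graph_extension_coord {y1 y2 a1 a2} {t1 t2 : R} : G (y1, a1) -> G (y2, a2) ->
  y1 + t1 *: x0 = y2 + t2 *: x0 -> t1 = t2.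
Proof.
move=> G1 G2 E; apply: contrapT => /eqP t12; apply: x0_new.
have t12' : t1 - t2 != 0 by rewrite subr_eq0.
have E2 : (t1 - t2) *: x0 = y2 - y1.
  have E1 : t1 *: x0 = y2 + t2 *: x0 - y1 by rewrite -E addrAC subrr add0r.
  by rewrite scalerBl E1 addrAC addrK.
exists ((t1 - t2)^-1 * (a2 - a1)).
have -> : x0 = (t1 - t2)^-1 *: (y2 - y1) by rewrite -E2 scalerA mulVf // scale1r.
by apply: (dominated_graphZ domG); exact: (dominated_graphB domG).
Qed.

Lemma graph_extension_dominated y a (t : R) : G (y, a) -> a + t * c <= `|y + t *: x0|.
Proof.
move=> Gy; have [_ _ Gdom] := domG.
have [t_neg|t_pos|->] := ltgtP t 0; last by rewrite scale0r mul0r !addr0; exact: Gdom.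
- have s_pos : 0 < - t by rewrite oppr_gt0.
  have := c_lower (dominated_graphZ domG (- t)^-1 Gy).
  rewrite -(ler_pM2l s_pos) mulrBr mulrA mulfV ?gt_eqF // mul1r.
  rewrite -[X in X * `|_|](gtr0_norm s_pos) -normrZ scalerBr scalerA mulfV ?gt_eqF //.
  rewrite scale1r scaleNr opprK; lra.
- have := c_upper (dominated_graphZ domG t^-1 Gy).
  rewrite -(ler_pM2l t_pos) mulrBr mulrA mulfV ?gt_eqF // mul1r.
  rewrite -[X in X * `|_|](gtr0_norm t_pos) -normrZ scalerDr scalerA mulfV ?gt_eqF //.
  rewrite scale1r; lra.
Qed.

Lemma graph_extension_proper : dominated_graph graph_extension /\ G `<` graph_extension.
Proof.
have [Gfun Glin _] := domG; split; last first.
  split=> [[y a] Gy|GB]; first by exists y, a, 0; rewrite scale0r mul0r !addr0.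
  have [[x1 a1] G1] := G_ne; apply: x0_new; exists c; apply: GB.
  by exists 0, 0, 1; split; [exact: dominated_graph0 G1|rewrite scale1r mul1r !add0r].
split.
- move=> x a b [y1 [a1 [t1 [G1 [E1 ->]]]]] [y2 [a2 [t2 [G2 [E2 ->]]]]].
  have Et := graph_extension_coord G1 G2 (etrans (esym E1) E2); subst t2.
  have Ey : y1 = y2 by apply: (addIr (t1 *: x0)); rewrite -E1 -E2.
  by subst y2; rewrite (Gfun _ _ _ G1 G2).
- move=> x y a b t [y1 [a1 [t1 [G1 [-> ->]]]]] [y2 [a2 [t2 [G2 [-> ->]]]]].
  exists (t *: y1 + y2), (t * a1 + a2), (t * t1 + t2); split; first exact: Glin.
  by congr (_, _); [rewrite scalerDr scalerDl scalerA addrACA|ring].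
- by move=> x a [y [a1 [t [Gy [-> ->]]]]]; exact: graph_extension_dominated.
Qed.

End OneStepExtension.

Lemma dominated_graph_bigcup (F : set (set (V * R))) :
  F `<=` dominated_graph -> total_on F subset -> dominated_graph (\bigcup_(G in F) G).
Proof.
move=> Fdom Ftot.
have common p q : (\bigcup_(G in F) G) p -> (\bigcup_(G in F) G) q ->
    exists2 G, F G & G p /\ G q.
  move=> [G1 F1 G1p] [G2 F2 G2q].
  by have [/(_ p G1p) G2p|/(_ q G2q) G1q] := Ftot _ _ F1 F2; [exists G2|exists G1].
split.
- move=> x a b Ha Hb; have [G /Fdom[Gfun _ _] [Ga Gb]] := common _ _ Ha Hb.
  exact: Gfun Ga Gb.
- move=> x y a b t Ha Hb; have [G FG [Ga Gb]] := common _ _ Ha Hb.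
  by exists G => //; have [_ Glin _] := Fdom _ FG; exact: Glin.
- by move=> x a Ha; have [G /Fdom[_ _ Gdom] [Ga _]] := common _ _ Ha Ha; exact: Gdom.
Qed.

(* The empty graph is admitted so that the union of the empty chain qualifies. *)
Definition norming_graph (z : V) (G : set (V * R)) : Prop :=
  dominated_graph G /\ (G !=set0 -> G (z, `|z|)).

Lemma line_norming_graph (z : V) :
  norming_graph z [set p | exists t : R, p = (t *: z, t * `|z|)].
Proof.
split=> [|_]; last by exists 1; rewrite scale1r mul1r.
split.
- move=> x a b [t [-> ->]] [s [tsz ->]].
  have [->|z0] := eqVneq z 0; first by rewrite normr0 !mulr0.
  congr (_ * _); apply/eqP; rewrite -subr_eq0; apply: contraNT z0 => ts.
  by rewrite -[z]scale1r -(mulVf ts) -scalerA scalerBl tsz subrr scaler0.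
- move=> x y a b t [t1 [-> ->]] [t2 [-> ->]].
  by exists (t * t1 + t2); rewrite scalerDl scalerA mulrDl mulrA.
- by move=> x a [t [-> ->]]; rewrite normrZ ler_wpM2r // ler_norm.
Qed.

Lemma hahn_banach_norming (z : V) :
  exists l : V -> R, (forall (a : R) u v, l (a *: u + v) = a * l u + l v) /\
    (forall v, `|l v| <= `|v|) /\ l z = `|z|.
Proof.
have chain F : F `<=` norming_graph z -> total_on F subset ->
    norming_graph z (\bigcup_(G in F) G).
  move=> Fn Ftot; split; first by apply: dominated_graph_bigcup => // G /Fn[].
  by move=> [p [G FG Gp]]; exists G => //; apply: (Fn G FG).2; exists p.
have [A [[domA zA] Amax]] := Zorn_bigcup chain.
have A_ne : A !=set0.
  apply: contrapT => /set0P/negP/negPn/eqP A0.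
  apply: (Amax _ _ (line_norming_graph z)); rewrite A0; split => //.
  by move=> /(_ (z, `|z|)) /(_ (ex_intro _ 1 _)); rewrite scale1r mul1r => /(_ erefl).
have [Afun Alin Adom] := domA.
have A_total x : exists a, A (x, a).
  apply: contrapT => x_new.
  have [c [c_lo c_up]] := dominated_graph_gap domA x A_ne.
  have [domB AB] := graph_extension_proper domA A_ne x_new c_lo c_up.
  by apply: (Amax _ AB); split => // _; apply: AB.1; exact: zA.
pose l x := xget 0 [set a | A (x, a)].
have lA x : A (x, l x) by apply: (@xgetPex _ 0 [set a | A (x, a)]); exact: A_total.
exists l; split; [|split].
- by move=> a u v; apply: (Afun (a *: u + v)); [exact: lA|exact: Alin].
- move=> v; rewrite ler_norml (Adom _ _ (lA v)) andbT lerNl.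
  by have := Adom _ _ (dominated_graphZ domA (-1) (lA v)); rewrite scaleN1r normrN mulN1r.
- exact: (Afun _ _ _ (lA z) (zA A_ne)).
Qed.

End HahnBanach.

Lemma near_norm_lt (R : realType) (V : normedModType R) (x : V) (P : V -> Prop) :
  (\forall y \near x, P y) -> exists2 r : R, 0 < r & forall y, `|y - x| < r -> P y.
Proof.
move=> /nbhs_normP[r /= r0 Pr]; exists r => // y yx; apply: Pr.
by rewrite /= distrC.
Qed.

Lemma derive1_comp_diff (R : realType) (V W : normedModType R) (g : R -> V)
    (G : V -> W) (t : R) :
  differentiable g t -> differentiable G (g t) ->
  derive1 (G \o g) t = 'd G (g t) (derive1 g t).
Proof.
move=> dg dG; rewrite (derive1E' (differentiable_comp dg dG)) diff_comp //=.
by rewrite derive1E'.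
Qed.

Section C1Maps.
Variables (R : realType) (X0 X Y : normedModType R) (i : X0 -> X).
Hypothesis i_linear : forall (a : R) u v, i (a *: u + v) = a *: i u + i v.
Hypothesis i_bounded : exists C : R, 0 < C /\ forall x, `|i x| <= C * `|x|.

Lemma isC1_linear (S : set X0) (L : X -> Y) :
  (forall (a : R) u v, L (a *: u + v) = a *: L u + L v) ->
  (exists K : R, forall v, `|L v| <= K * `|v|) ->
  isC1 i S (L \o i) (fun _ => L).
Proof.
move=> L_linear L_bounded x _; do 2!split => //.
split=> e e0; exists 1; split=> // y _ _; last by move=> v; rewrite subrr normr0 mulr_ge0 // ltW.
by rewrite /= -(linear_lawB L_linear) subrr normr0 mulr_ge0 // ltW.
Qed.

Lemma isC1_comp_linear (Z : normedModType R) (S : set X0) (F : X0 -> Y)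
    (DF : X0 -> X -> Y) (L : Y -> Z) :
  (forall (a : R) u v, L (a *: u + v) = a *: L u + L v) ->
  (exists K : R, forall v, `|L v| <= K * `|v|) ->
  isC1 i S F DF -> isC1 i S (L \o F) (fun x v => L (DF x v)).
Proof.
move=> L_linear L_bounded C1F x Sx.
have [K [K0 HK]] := linear_law_pos_bound L_bounded.
have [DF_linear [[K' HK'] [Hest Hcont]]] := C1F x Sx.
have eK e : 0 < e -> 0 < e / K by move=> e0; rewrite divr_gt0.
have scaleK (w : Y) e : `|w| <= e / K -> `|L w| <= e.
  by move=> we; apply: (le_trans (HK w)); rewrite mulrC -ler_pdivlMr.
split; first by move=> a u v; rewrite DF_linear L_linear.
split.
  exists (K * K') => v; rewrite -mulrA; apply: le_trans (HK _) _.
  by rewrite ler_wpM2l // ltW.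
split=> e e0.
- have [d [d0 Hd]] := Hest _ (eK _ e0); exists d; split => // y Sy yx.
  rewrite /= -!(linear_lawB L_linear); apply: scaleK.
  by rewrite mulrAC; exact: Hd.
- have [d [d0 Hd]] := Hcont _ (eK _ e0); exists d; split => // y Sy yx v.
  rewrite -(linear_lawB L_linear); apply: scaleK.
  by rewrite mulrAC; exact: Hd.
Qed.

Lemma isC1_diff_near (S : set X0) (F : X0 -> Y) (DF : X0 -> X -> Y) (G : X0 -> Y)
    (x : X0) :
  isC1 i S F DF -> (\forall y \near x, S y /\ G y = F y) ->
  differentiable G x /\ ('d G x : X0 -> Y) = DF x \o i.
Proof.
move=> C1F GF; have [Sx Gx] := nbhs_singleton GF.
have [C [C0 HC]] := i_bounded.
have [DF_linear [[K HK] [Hest _]]] := C1F x Sx.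
have [r r0 Hr] := near_norm_lt GF.
apply: diff_of_estimate.
- by move=> a u v; rewrite /= i_linear DF_linear.
- exists (`|K| * C) => v; apply: (le_trans (HK _)); rewrite -mulrA.
  by apply: (le_trans (ler_wpM2r _ (ler_norm K))); rewrite ?ler_wpM2l.
move=> e e0; have [d [d0 Hd]] := Hest e e0.
exists (Num.min d r); split; first by rewrite lt_min d0.
move=> y; rewrite lt_min => /andP[yd yr]; have [Sy Gy] := Hr y yr.
by rewrite /= Gy Gx (linear_lawB i_linear); exact: Hd.
Qed.

Lemma isC1_diff_continuous (S : set X0) (F : X0 -> Y) (DF : X0 -> X -> Y) (x : X0) :
  isC1 i S F DF -> S x -> forall e : R, 0 < e -> exists d : R, 0 < d /\
    forall y, S y -> `|y - x| < d -> forall v, `|DF y (i v) - DF x (i v)| <= e * `|v|.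
Proof.
move=> C1F Sx e e0; have [C [C0 HC]] := i_bounded.
have [_ [_ [_ Hcont]]] := C1F x Sx.
have [d [d0 Hd]] := Hcont (e / C) (divr_gt0 e0 C0); exists d; split => // y Sy yx v.
apply: (le_trans (Hd y Sy yx (i v))).
apply: (le_trans (ler_wpM2l _ (HC v))); first by rewrite divr_ge0 // ltW.
by rewrite mulrA divfK // lt0r_neq0.
Qed.

End C1Maps.

Lemma open_chart_image (R : realType) (T : topologicalType) (Y : normedModType R)
    (c : chart T Y) (W : set T) :
  is_local_chart c -> open W -> open (cmap c @` (cdom c `&` W)).
Proof.
move=> [odom [oimg [cK [_ ci]]]] oW.
rewrite continuous_open_subspace // in ci.
rewrite openE => _ [m [dm Wm] <-].
have ciy : \forall y \near cmap c m, (cdom c `&` W) (cinv c y).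
  have := ci (cmap c m) (mem_set (imageP _ dm)).
  rewrite /continuous_at cK //; apply.
  by apply: open_nbhs_nbhs; split; [exact: openI|].
have imy : \forall y \near cmap c m, (cmap c @` cdom c) y.
  by apply: open_nbhs_nbhs; split => //; exact: imageP.
near=> y; have [m' dm' ym'] : (cmap c @` cdom c) y by near: y.
have : (cdom c `&` W) (cinv c y) by near: y.
by rewrite -ym' cK // => Wm'; exists m'.
Unshelve. all: by end_near. Qed.

Lemma affine_line_diff (R : realType) (V : normedModType R) (w b : V) (t : R) :
  differentiable (fun s : R => s *: w + b) t /\
  ('d (fun s : R => s *: w + b) t : R -> V) = (fun s => s *: w).
Proof.
apply: diff_of_estimate.
- by move=> a u v; rewrite scalerDl scalerA.
- by exists `|w| => v; rewrite normrZ mulrC.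
move=> e e0; exists 1; split => // y _.
by rewrite opprD addrACA subrr addr0 -scalerBl subrr normr0 mulr_ge0 // ltW.
Qed.

Section TangentSpace.
Variables (R : realType) (X0 X : completeNormedModType R) (i : X0 -> X)
  (M0 M : topologicalType) (j : M0 -> M) (A : set (chart M X)).
Hypothesis embA : C1_embedded i j A.
Variable eta : M0.

Local Notation reg := (regular j A eta).

Let i_linear : forall (a : R) u v, i (a *: u + v) = a *: i u + i v.
Proof. by case: embA => [[]]. Qed.
Let i_injective : injective i.
Proof. by case: embA => [[_ []]]. Qed.
Let i_bounded : exists C : R, 0 < C /\ forall x, `|i x| <= C * `|x|.
Proof. by case: embA => [[_ [_ []]]]. Qed.
Let i_dense : dense (range i).
Proof. by case: embA => [[_ [_ []]]]. Qed.
Let A_local c : A c -> is_local_chart c.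
Proof. by case: embA => _ [_ [_ [H _]]]; exact: H. Qed.
Let j_continuous U : open U -> open (j @^-1` U).
Proof. by case: embA => _ [_ [_ [_ [_ [H _]]]]]; exact: H. Qed.
Let A_restrict c : reg c -> exists c0, is_local_chart c0 /\ restricts i j c0 c.
Proof. by case: embA => _ [_ [_ [_ [_ [_ [_ [H _]]]]]]] [Ac dc]; exact: (H eta c Ac dc). Qed.
Let A_transition c d : reg c -> reg d ->
  exists DF, isC1 i (tdom i j c d) (trans i c d) DF.
Proof.
case: embA => _ [_ [_ [_ [_ [_ [_ [_ AC1]]]]]]] [Ac dc] [Ad dd].
by have [] := AC1 eta c d Ac Ad dc dd.
Qed.

Lemma chart_base_point c : reg c -> exists p, i p = cmap c (j eta).
Proof.
move=> rc; have [c0 [_ [c0dom c0map]]] := A_restrict rc.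
by exists (cmap c0 eta); apply/c0map/c0dom; case: rc.
Qed.

Lemma tdom_nbhs c d p : reg c -> reg d -> i p = cmap c (j eta) ->
  \forall y \near p, tdom i j c d y.
Proof.
move=> rc [Ad dd] ip; have [c0 [c0_local [c0dom c0map]]] := A_restrict rc.
have c0eta : cdom c0 eta by apply/c0dom; case: rc.
have -> : p = cmap c0 eta by apply: i_injective; rewrite ip c0map.
have d_open : open (cdom d) by case: (A_local Ad).
have Q_open := open_chart_image c0_local (j_continuous d_open).
apply: filterS (open_nbhs_nbhs (conj Q_open (imageP _ (conj c0eta dd)))).
by move=> _ [m [c0m dm] <-]; exists m; do !split => //; [exact/c0dom|exact: c0map].
Qed.

Lemma transition_derivative_exists c d : reg c -> reg d ->
  exists D, trans_deriv i j eta c d D.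
Proof.
move=> rc rd; have [p ip] := chart_base_point rc.
by have [DF C1DF] := A_transition rc rd; exists (DF p), DF; split => //; exists p.
Qed.

Lemma test_function_diff F c : D1s j A eta F -> reg c ->
  differentiable (F \o cinv c) (cmap c (j eta)).
Proof.
move=> [U [nU FU]] rc; apply: (FU c rc).1.
by exists (j eta) => //; split; [exact: nbhs_singleton nU|case: rc].
Qed.

(* Transitions are C^1 only in the norm of X0: the chain rule is first obtained
   along the directions i h, h in X0, then extended to X by density. *)
Lemma transition_chain_rule F c d D : D1s j A eta F -> reg c -> reg d ->
  trans_deriv i j eta c d D -> forall z,
  'd (F \o cinv c) (cmap c (j eta)) z = 'd (F \o cinv d) (cmap d (j eta)) (D z).
Proof.
move=> F_test rc rd [DF [C1DF [p [ip ->]]]].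
have near_tdom := tdom_nbhs rc rd ip.
have [DFp_linear [DFp_bounded _]] := C1DF p (nbhs_singleton near_tdom).
have [_ [_ [cK _]]] := A_local rc.1; have [_ [_ [dK _]]] := A_local rd.1.
have Tp : trans i c d p = cmap d (j eta) by rewrite /trans ip cK //; case: rc.
have [dT dTE] :=
  isC1_diff_near i_linear i_bounded C1DF (filterS (fun y Ty => conj Ty erefl) near_tdom).
have [di diE] : differentiable i p /\ ('d i p : X0 -> X) = i.
  by have [C [_ HC]] := i_bounded; exact: linear_law_diff i_linear (ex_intro _ C HC) p.
have dFc : differentiable (F \o cinv c) (i p) by rewrite ip; exact: test_function_diff.
have dFd : differentiable (F \o cinv d) (trans i c d p) by rewrite Tp; exact: test_function_diff.
have same_near : \forall y \near p, (F \o cinv c \o i) y = (F \o cinv d \o trans i c d) y.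
  by apply: filterS near_tdom => y [m [cm [dm iy]]]; rewrite /= /trans iy cK // dK.
have along_X0 h : 'd (F \o cinv c) (cmap c (j eta)) (i h) =
    'd (F \o cinv d) (cmap d (j eta)) (DF p (i h)).
  have := near_eq_derive h same_near.
  rewrite deriveE; last exact: differentiable_comp di dFc.
  rewrite deriveE; last exact: differentiable_comp dT dFd.
  rewrite (diff_comp di dFc) (diff_comp dT dFd) /= diE dTE.
  by rewrite /= ip Tp.
suff -> : ('d (F \o cinv c) (cmap c (j eta)) : X -> R) =
    'd (F \o cinv d) (cmap d (j eta)) \o DF p by [].
apply: (continuous_eq_on_dense_range i_dense _ _ along_X0).
  exact: diff_continuous (test_function_diff F_test rc).
move=> z; apply: continuous_comp; last exact: diff_continuous (test_function_diff F_test rd) _.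
exact: linear_law_continuous DFp_linear DFp_bounded z.
Qed.

Lemma test_function_curve F d g : D1s j A eta F -> reg d -> g 0 = j eta ->
  C1at_chart d g ->
  derive1 (F \o g) 0 = 'd (F \o cinv d) (cmap d (j eta)) (derive1 (cmap d \o g) 0).
Proof.
move=> F_test rd g0 [e [e0 [g_dom C1g]]].
have [_ [_ [dK _]]] := A_local rd.1.
have [/derivable1_diffP dg _] := C1g 0 (ltac:(by rewrite oppr_lt0 e0)).
have same_near : \forall t \near 0, (F \o g) t = ((F \o cinv d) \o (cmap d \o g)) t.
  apply/nbhs_norm0P; exists e => // t /= te.
  by rewrite dK //; apply: g_dom; rewrite -ltr_norml.
rewrite derive1E (near_eq_derive (1 : R) same_near) -derive1E derive1_comp_diff //=.
  by rewrite g0.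
by rewrite g0; exact: test_function_diff.
Qed.

Definition chart_line (c : chart M X) (v : X) : R -> M :=
  fun t => cinv c (t *: v + cmap c (j eta)).

Lemma chart_line_curve c v : reg c ->
  [/\ chart_line c v 0 = j eta, C1at_chart c (chart_line c v)
    & derive1 (cmap c \o chart_line c v) 0 = v].
Proof.
move=> rc; have [_ [img_open [cK _]]] := A_local rc.1.
have [r r0 img_ball] := near_norm_lt (open_nbhs_nbhs (conj img_open (imageP _ rc.2))).
pose e := r / (`|v| + 1).
have v1_gt0 : 0 < `|v| + 1 by rewrite ltr_wpDl.
have e0 : 0 < e by rewrite divr_gt0.
have near_itv t : - e < t < e -> \forall s \near t, - e < s < e.
  move=> te; have := @near_in_itvoo R (- e) e t; rewrite in_itv /= => /(_ te).
  by apply: filterS => s; rewrite in_itv.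
have on_line t : - e < t < e ->
    cdom c (chart_line c v t) /\ cmap c (chart_line c v t) = t *: v + cmap c (j eta).
  rewrite -ltr_norml /chart_line => te.
  have [m cm <-] : (cmap c @` cdom c) (t *: v + cmap c (j eta)).
    apply: img_ball; rewrite addrK normrZ; apply: le_lt_trans (_ : `|t| * (`|v| + 1) < r).
      by rewrite ler_wpM2l // lerDl.
    by rewrite -ltr_pdivlMr.
  by rewrite cK.
have line_deriv t : - e < t < e ->
    derivable (cmap c \o chart_line c v) t 1 /\ derive1 (cmap c \o chart_line c v) t = v.
  move=> te; have [da daE] := affine_line_diff v (cmap c (j eta)) t.
  have same_near : \forall s \near t, (fun s => s *: v + cmap c (j eta)) s =
      (cmap c \o chart_line c v) s.
    by apply: filterS (near_itv t te) => s /on_line[_ E]; rewrite /= E.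
  split; first by apply: (near_eq_derivable same_near); exact/derivable1_diffP.
  by rewrite derive1E -(near_eq_derive (1 : R) same_near) -derive1E derive1E' // daE scale1r.
have e_0 : - e < 0 < e by rewrite oppr_lt0 e0.
split; last exact: (line_deriv 0 e_0).2.
  by rewrite /chart_line scale0r add0r cK //; case: rc.
exists e; split=> //; split=> [t /on_line[]//|t te].
split; first exact: (line_deriv t te).1.
have const_near : {near t, cst v =1 derive1 (cmap c \o chart_line c v)}.
  by apply: filterS (near_itv t te) => s /line_deriv[_ ->].
by rewrite (line_deriv t te).2; exact: cvg_trans (near_eq_cvg const_near) (cvg_cst v).
Qed.

Lemma transition_derivative_bounded c d D : reg c -> reg d ->
  trans_deriv i j eta c d D -> exists K : R, forall v, `|D v| <= K * `|v|.
Proof.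
move=> rc rd [DF [C1DF [p [ip ->]]]].
by have [_ []] := C1DF p (nbhs_singleton (tdom_nbhs rc rd ip)).
Qed.

Section Shell.
Variables (Xt : completeNormedModType R) (it : X -> Xt) (Mt : topologicalType)
  (jt : M -> Mt) (At : set (chart Mt Xt)).
Hypothesis embAt : C1_embedded it jt At.
Hypothesis A_shell : forall c, A c -> exists ct, At ct /\ restricts it jt c ct.

Let it_linear : forall (a : R) u v, it (a *: u + v) = a *: it u + it v.
Proof. by case: embAt => [[]]. Qed.
Let it_injective : injective it.
Proof. by case: embAt => [[_ []]]. Qed.
Let it_bounded : exists C : R, 0 < C /\ forall x, `|it x| <= C * `|x|.
Proof. by case: embAt => [[_ [_ []]]]. Qed.
Let At_local ct : At ct -> is_local_chart ct.
Proof. by case: embAt => _ [_ [_ [H _]]]; exact: H. Qed.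
Let At_transition m ct dt : At ct -> At dt -> cdom ct (jt m) -> cdom dt (jt m) ->
  exists DF, isC1 it (tdom it jt ct dt) (trans it ct dt) DF.
Proof.
case: embAt => _ [_ [_ [_ [_ [_ [_ [_ AtC1]]]]]]] Act Adt cm dm.
by have [] := AtC1 m ct dt Act Adt cm dm.
Qed.

Lemma shell_functional_test (l : Xt -> R) c ct :
  (forall (a : R) u v, l (a *: u + v) = a *: l u + l v) ->
  (forall w, `|l w| <= `|w|) -> reg c -> At ct -> restricts it jt c ct ->
  D1s j A eta (fun m => l (cmap ct (jt m))).
Proof.
move=> l_linear l_bounded rc Act [ct_dom ct_map].
have l_bnd : exists K : R, forall w, `|l w| <= K * `|w| by exists 1 => w; rewrite mul1r.
have [c_open _] := A_local rc.1.
exists (cdom c); split; first by apply: open_nbhs_nbhs; split=> //; case: rc.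
move=> c' rc' /=.
have [ct' [Act' [ct'_dom ct'_map]]] := A_shell rc'.1.
have c'_local := A_local rc'.1; have [_ [_ [c'K _]]] := c'_local.
have [_ [_ [ct'K _]]] := At_local Act'.
have [DF C1DF] := At_transition Act' Act ((ct'_dom _).1 rc'.2) ((ct_dom _).1 rc.2).
have C1lT := isC1_comp_linear l_linear l_bnd C1DF.
have S_open : open (cmap c' @` (cdom c `&` cdom c')).
  by rewrite setIC; exact: open_chart_image c'_local c_open.
have near_S x : (cmap c' @` (cdom c `&` cdom c')) x -> \forall y \near x,
    tdom it jt ct' ct y /\ ((fun m => l (cmap ct (jt m))) \o cinv c') y = (l \o trans it ct' ct) y.
  move=> Sx; apply: filterS (open_nbhs_nbhs (conj S_open Sx)) => _ [m [cm c'm] <-].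
  split; first by exists m; split; [exact/ct'_dom|split; [exact/ct_dom|exact: ct'_map]].
  by rewrite /= /trans c'K // ct'_map // ct'K //; exact/ct'_dom.
have diffS x Sx := isC1_diff_near it_linear it_bounded C1lT (near_S x Sx).
split=> [x /diffS[]//|x Sx e e0].
have [Tx _] := nbhs_singleton (near_S x Sx).
have [d [d0 Hd]] := isC1_diff_continuous it_bounded C1lT Tx e0.
exists d; split=> // y Sy yx v; rewrite (diffS y Sy).2 (diffS x Sx).2.
exact: Hd (nbhs_singleton (near_S y Sy)).1 yx v.
Qed.

Lemma test_differentials_separate c z1 z2 : reg c ->
  (forall F, D1s j A eta F ->
    'd (F \o cinv c) (cmap c (j eta)) z1 = 'd (F \o cinv c) (cmap c (j eta)) z2) ->
  z1 = z2.
Proof.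
move=> rc same_d; apply: contrapT => /eqP z12.
have w0 : it (z1 - z2) != 0.
  apply: contra z12 => /eqP w0; rewrite -subr_eq0; apply/eqP/it_injective.
  by rewrite w0 (linear_law0 it_linear).
have [l [l_linear [l_bounded lw]]] := hahn_banach_norming (it (z1 - z2)).
have [ct [Act ct_restr]] := A_shell rc.1.
have F_test := shell_functional_test l_linear l_bounded rc Act ct_restr.
have [_ [img_open [cK _]]] := A_local rc.1.
have l_bnd : exists K : R, forall w, `|l w| <= K * `|w| by exists 1 => w; rewrite mul1r.
have C1l := isC1_linear it (S := cmap c @` cdom c) l_linear l_bnd.
have near_img : \forall y \near cmap c (j eta), (cmap c @` cdom c) y /\
    ((fun m => l (cmap ct (jt m))) \o cinv c) y = (l \o it) y.
  apply: filterS (open_nbhs_nbhs (conj img_open (imageP _ rc.2))) => _ [m cm <-].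
  by split; [exact: imageP|rewrite /= cK // (ct_restr.2 m cm)].
have [_ dF] := isC1_diff_near it_linear it_bounded C1l near_img.
have := same_d _ F_test; rewrite dF /= => l12.
by move: w0; rewrite -normr_eq0 -lw (linear_lawB it_linear) (linear_lawB l_linear) l12 subrr eqxx.
Qed.

Lemma tderiv_test c f v : reg c -> tderiv i j A eta c f v ->
  forall F, D1s j A eta F -> derive1 (F \o f) 0 = 'd (F \o cinv c) (cmap c (j eta)) v.
Proof.
move=> rc [g [Cg [fg [d [rd [C1g [D [tD ->]]]]]]]] F F_test.
rewrite -(fg F F_test) (test_function_curve F_test rd Cg.1 C1g).
exact: transition_chain_rule F_test rd rc tD _.
Qed.

Lemma chart_tangent_well_defined c : reg c ->
  forall f g : R -> M, C1_curve i j A eta f -> C1_curve i j A eta g ->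
    same_tangent j A eta f g ->
  forall d1 d2, reg d1 -> reg d2 -> C1at_chart d1 f -> C1at_chart d2 g ->
  forall D1 D2, trans_deriv i j eta d1 c D1 -> trans_deriv i j eta d2 c D2 ->
    D1 (derive1 (cmap d1 \o f) 0) = D2 (derive1 (cmap d2 \o g) 0).
Proof.
move=> rc f g Cf Cg fg d1 d2 rd1 rd2 C1f C1g D1 D2 tD1 tD2.
apply: (test_differentials_separate rc) => F F_test.
rewrite -(transition_chain_rule F_test rd1 rc tD1) -(transition_chain_rule F_test rd2 rc tD2).
rewrite -(test_function_curve F_test rd1 Cf.1 C1f) -(test_function_curve F_test rd2 Cg.1 C1g).
exact: fg.
Qed.

Lemma chart_tangent_norms_equivalent c d : reg c -> reg d ->
  exists C1 C2 : R, 0 < C1 /\ 0 < C2 /\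
    forall (f : R -> M) vc vd, tderiv i j A eta c f vc -> tderiv i j A eta d f vd ->
      `|vd| <= C1 * `|vc| /\ `|vc| <= C2 * `|vd|.
Proof.
move=> rc rd.
have change_chart c' d' : reg c' -> reg d' -> exists2 C : R, 0 < C &
    forall f vc vd, tderiv i j A eta c' f vc -> tderiv i j A eta d' f vd -> `|vd| <= C * `|vc|.
  move=> rc' rd'; have [D tD] := transition_derivative_exists rc' rd'.
  have [K [K0 HK]] := linear_law_pos_bound (transition_derivative_bounded rc' rd' tD).
  exists K => // f vc vd tc td.
  suff -> : vd = D vc by exact: HK.
  apply: (test_differentials_separate rd') => F F_test.
  rewrite -(tderiv_test rd' td F_test) (tderiv_test rc' tc F_test).
  exact: transition_chain_rule F_test rc' rd' tD _.
have [C1 C1_gt0 HC1] := change_chart c d rc rd.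
have [C2 C2_gt0 HC2] := change_chart d c rd rc.
exists C1, C2; do 2!split=> //; move=> f vc vd tc td.
by split; [exact: HC1 tc td|exact: HC2 td tc].
Qed.

Lemma chart_tangent_bijective c : reg c ->
  (forall f, C1_curve i j A eta f -> exists v, tderiv i j A eta c f v) /\
  (forall f g v, C1_curve i j A eta f -> C1_curve i j A eta g ->
     tderiv i j A eta c f v -> tderiv i j A eta c g v -> same_tangent j A eta f g) /\
  (forall v : X, exists f, C1_curve i j A eta f /\ tderiv i j A eta c f v).
Proof.
move=> rc; split; [|split].
- move=> f Cf; have [_ [c1 [rc1 [C1f _]]]] := Cf.
  have [D tD] := transition_derivative_exists rc1 rc.
  exists (D (derive1 (cmap c1 \o f) 0)), f; do !split => //.
  by exists c1; do !split => //; exists D.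
- move=> f g v _ _ tf tg F F_test.
  by rewrite (tderiv_test rc tf F_test) (tderiv_test rc tg F_test).
move=> v; have [line0 C1line line'] := chart_line_curve v rc.
have Cline : C1_curve i j A eta (chart_line c v).
  split=> //; exists c; split=> //; split=> // d rd C1d D tD; rewrite line'.
  apply: (test_differentials_separate rd) => F F_test.
  rewrite -(test_function_curve F_test rd line0 C1d) -(transition_chain_rule F_test rc rd tD).
  by rewrite (test_function_curve F_test rc line0 C1line) line'.
have [D tD] := transition_derivative_exists rc rc.
exists (chart_line c v); split=> //; exists (chart_line c v); do !split => //.
exists c; do !split => //; exists D; split=> //; rewrite line'.
by apply: (test_differentials_separate rc) => F F_test; exact: transition_chain_rule.
Qed.

End Shell.

End TangentSpace.

Theorem lemma2p10 (R : realType) (X0 X : completeNormedModType R) (i : X0 -> X)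
  (M0 M : topologicalType) (j : M0 -> M) (A : set (chart M X))
  (HA : quasi_differentiable i j A) (eta : M0) :
  (forall c, regular j A eta c ->
     forall f g : R -> M,
       C1_curve i j A eta f -> C1_curve i j A eta g ->
       same_tangent j A eta f g ->
       forall d1 d2, regular j A eta d1 -> regular j A eta d2 ->
       C1at_chart d1 f -> C1at_chart d2 g ->
       forall D1 D2, trans_deriv i j eta d1 c D1 -> trans_deriv i j eta d2 c D2 ->
       D1 (derive1 (cmap d1 \o f) 0) = D2 (derive1 (cmap d2 \o g) 0)) /\
  (forall c d, regular j A eta c -> regular j A eta d ->
     exists C1 C2 : R, 0 < C1 /\ 0 < C2 /\
       forall f : R -> M0, T00_curve i j A eta f ->
       forall vc vd, tderiv i j A eta c (j \o f) vc -> tderiv i j A eta d (j \o f) vd ->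
         `|vd| <= C1 * `|vc| /\ `|vc| <= C2 * `|vd|) /\
  (forall c, regular j A eta c ->
     (forall f, C1_curve i j A eta f -> exists v, tderiv i j A eta c f v) /\
     (forall f g v, C1_curve i j A eta f -> C1_curve i j A eta g ->
        tderiv i j A eta c f v -> tderiv i j A eta c g v -> same_tangent j A eta f g) /\
     (forall v : X, exists f, C1_curve i j A eta f /\ tderiv i j A eta c f v)).
Proof.
have [embA [_ [Xt [it [Mt [jt [At [embAt [A_shell _]]]]]]]]] := HA.
split; [|split].
- exact: chart_tangent_well_defined embA eta Xt it Mt jt At embAt A_shell.
- move=> c d rc rd.
  have [C1 [C2 [C1_gt0 [C2_gt0 HC]]]] :=
    chart_tangent_norms_equivalent embA embAt A_shell rc rd.
  by exists C1, C2; do 2!split=> //; move=> f _; exact: HC.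
- exact: chart_tangent_bijective embA eta Xt it Mt jt At embAt A_shell.
Qed.
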